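(* $\mathcal{F}_0\subseteq\mathcal{F}$.
   Context: Let $G=(V,E)$ be a finite undirected graph with $V=Q\cup R\cup B$ (pairwise disjoint), where $Q$ is the set of sources, $R$ the set of potential relay locations and $B$ the set of potential sink locations; let $h_{\max}$ be a positive integer and $c_s,c_r\ge0$. Form the augmented graph $\tilde G=(\tilde V,\tilde E)$ with $\tilde V=V\cup\{0\}$, where $0$ is a new vertex (virtual sink), and $\tilde E=E\cup\{\{0,b\}:b\in B\}$. Let $\tilde R=R\cup B$ with node costs $c_j=c_r$ for $j\in R$ and $c_j=c_s$ for $j\in B$. For a source $k\in Q$, a node cut for $k$ is a set $\gamma\subseteq\tilde V\setminus\{k,0\}$ whose deletion disconnects $k$ from $0$ in $\tilde G$; it is minimal if no proper subset is a node cut; $\Gamma^k$ denotes the set of minimal node cuts for $k$. A vector $\underline y=((y_{j,k})_{k\in Q,\,j\in\tilde V\setminus\{k,0\}},(y_j)_{j\in\tilde R})$ belongs to $\mathcal F$ iff: (i) $\sum_{j\in\gamma}y_{j,k}\ge1$ for all $\gamma\in\Gamma^k$, $k\in Q$; (ii) $y_j\ge y_{j,k}$ for all $j\in\tilde R$, $k\in Q$; (iii) $\sum_{j\in\tilde V\setminus\{k,0\}}y_{j,k}\le h_{\max}$ for all $k\in Q$; (iv) all $y_{j,k},y_j\in\{0,1\}$. For $k\in Q$ let $\mathcal P'_k$ be the set of paths in $\tilde G$ from $k$ to $0$ with at most $h_{\max}+1$ edges, and let $\mathcal U_0$ be the set of tuples $\underline g=(p_k)_{k\in Q}$ with $p_k\in\mathcal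 P'_k$. For $\underline g\in\mathcal U_0$ define $\underline x(\underline g)$ by $x_{j,k}=1$ if $j$ is a vertex of $p_k$ and $0$ otherwise ($k\in Q$, $j\in\tilde V\setminus\{k,0\}$), and $x_j=1$ if $x_{j,k}=1$ for some $k\in Q$ and $0$ otherwise ($j\in\tilde R$). Let $\mathcal F_0=\{\underline x(\underline g):\underline g\in\mathcal U_0\}$. *)

From mathcomp Require Import all_boot.
Set Implicit Arguments. Unset Strict Implicit. Unset Printing Implicit Defensive.

Section Defs.
Variables (T : finType) (e : rel T) (Q R B : {set T}) (hmax : nat).

(* Augmented graph G~: vertex set option T, where None is the virtual sink 0
   and Some v is the original vertex v; Some b -- None is an edge iff b \in B. *)
Definition aug_edge : rel (option T) := fun u v =>
  match u, v with
  | Some a, Some b => e a b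
  | Some a, None => a \in B
  | None, Some b => b \in B
  | None, None => false
  end.

Definition dom_k (k : T) : {set option T} :=
  [set j : option T | (j != Some k) && (j != None)].

Definition Rtilde : {set option T} := [set j : option T |
  if j is Some v then (v \in R) || (v \in B) else false].

Definition node_cut (k : T) (gamma : {set option T}) : Prop :=
  gamma \subset dom_k k /\
  ~ (exists p : seq (option T),
        [&& path aug_edge (Some k) p, last (Some k) p == None
          & all (fun v => v \notin gamma) p]).

Definition min_node_cut (k : T) (gamma : {set option T}) : Prop :=
  node_cut k gamma /\ forall gamma' : {set option T}, gamma' \proper gamma -> ~ node_cut k gamma'.

(* The feasible set F.  yk k j = y_{j,k}, yr j = y_j; only the entries with
   k \in Q, j \in V~\{k,0} (resp. j \in R~) are meaningful/constrained. *)
Definition in_F (yk : T -> option T -> nat) (yr : option T -> nat) : Prop :=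
  (forall k, k \in Q -> forall gamma, min_node_cut k gamma ->
     1 <= \sum_(j in gamma) yk k j) /\
  (forall j, j \in Rtilde -> forall k, k \in Q -> yk k j <= yr j) /\
  (forall k, k \in Q -> \sum_(j in dom_k k) yk k j <= hmax) /\
  (forall k, k \in Q -> forall j, j \in dom_k k -> (yk k j == 0) || (yk k j == 1)) /\
  (forall j, j \in Rtilde -> (yr j == 0) || (yr j == 1)).

Definition in_Pk (k : T) (p : seq (option T)) : Prop :=
  [/\ path aug_edge (Some k) p, last (Some k) p = None,
      uniq (Some k :: p) & size p <= hmax.+1].

(* x(g) for g = (p_k)_{k in Q}, represented by g : T -> seq (option T). *)
Definition x_k (g : T -> seq (option T)) (k : T) (j : option T) : nat :=
  nat_of_bool (j \in Some k :: g k).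

Definition x_r (g : T -> seq (option T)) (j : option T) : nat :=
  nat_of_bool [exists k in Q, x_k g k j == 1].

Definition in_F0 (yk : T -> option T -> nat) (yr : option T -> nat) : Prop :=
  exists g : T -> seq (option T), (forall k, k \in Q -> in_Pk k (g k)) /\
    (forall k, k \in Q -> forall j, j \in dom_k k -> yk k j = x_k g k j) /\
    (forall j, j \in Rtilde -> yr j = x_r g j).
End Defs.

From mathcomp Require Import all_boot.

Set Implicit Arguments.
Unset Strict Implicit.
Unset Printing Implicit Defensive.

(* A path from k to the sink meets every node cut for k, which gives (i); a
   simple path with at most hmax+1 edges has at most hmax vertices besides k
   and 0, which gives (iii); (ii) and (iv) hold because x_j is the 0/1
   maximum of the x_{j,k}. *)

Lemma sum_mem_card (T : finType) (s : seq T) :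
  \sum_(j : T) nat_of_bool (j \in s) = #|s|.
Proof.
rewrite -sum1_card [RHS]big_mkcond /=.
by apply: eq_bigr => j _; case: (j \in s).
Qed.

Section PathIncidence.
Variables (T : finType) (e : rel T) (Q R B : {set T}).
Implicit Types (k : T) (p : seq (option T)) (gamma : {set option T}).

Lemma node_cut_meets_path k p gamma :
  path (aug_edge e B) (Some k) p -> last (Some k) p = None ->
  node_cut e B k gamma -> exists2 j, j \in gamma & j \in p.
Proof.
move=> p_path p_last [_ no_path]; apply/exists_inP; apply: contraT.
rewrite negb_exists_in => /forall_inP gamma_notin_p; case: no_path.
exists p; rewrite p_path p_last eqxx /=; apply/allP => j jp.
by apply/negP => /gamma_notin_p; rewrite jp.
Qed.

Lemma sum_dom_k_mem_le k p : uniq p -> None \in p ->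
  \sum_(j in dom_k k) nat_of_bool (j \in Some k :: p) <= (size p).-1.
Proof.
move=> p_uniq Np; rewrite -(size_rem Np) -(card_uniqP (rem_uniq None p_uniq)).
rewrite -sum_mem_card [X in _ <= X](bigID (mem (dom_k k))) /=.
apply: leq_trans (leq_addr _ _); apply/eq_leq/eq_bigr => j.
rewrite !inE => /andP [/negbTE jk jN].
by rewrite jk (mem_rem_uniq _ p_uniq) !inE jN.
Qed.

Lemma Rtilde_sub_dom_k k j : [disjoint Q & R] -> [disjoint Q & B] ->
  k \in Q -> j \in Rtilde R B -> j \in dom_k k.
Proof.
move=> dQR dQB kQ; case: j => [v|] //; rewrite !inE => vRB; apply/andP; split=> //.
apply: contraTneq vRB => -[->].
by rewrite (disjointFr dQR kQ) (disjointFr dQB kQ).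
Qed.

Lemma x_k_le_x_r (g : T -> seq (option T)) k j :
  k \in Q -> x_k g k j <= x_r Q g j.
Proof.
move=> kQ; rewrite {1}/x_k; case jk: (j \in _) => //=.
by rewrite lt0b; apply/exists_inP; exists k; rewrite // /x_k jk.
Qed.

End PathIncidence.

Theorem lemma2 (T : finType) (e : rel T) (Q R B : {set T}) (hmax : nat)
  (c_s c_r : nat)
  (e_sym : symmetric e) (e_irr : irreflexive e)
  (dQR : [disjoint Q & R]) (dQB : [disjoint Q & B]) (dRB : [disjoint R & B])
  (VQRB : Q :|: R :|: B = [set: T])
  (hmax_pos : 0 < hmax) :
  forall (yk : T -> option T -> nat) (yr : option T -> nat),
    in_F0 e Q R B hmax yk yr -> in_F e Q R B hmax yk yr.
Proof.
move=> yk yr [g [g_paths [yk_x yr_x]]].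
split; [|split; [|split; [|split]]].
- move=> k kQ gamma [cut _]; have [p_path p_last _ _] := g_paths k kQ.
  have [j jgamma jp] := node_cut_meets_path p_path p_last cut.
  rewrite (bigD1 j) //= yk_x ?(subsetP cut.1) //.
  by rewrite /x_k inE jp orbT.
- move=> j jR k kQ; have jd := Rtilde_sub_dom_k dQR dQB kQ jR.
  by rewrite yk_x // yr_x // x_k_le_x_r.
- move=> k kQ; have [_ p_last p_uniq p_size] := g_paths k kQ.
  have Np : None \in g k by move: (mem_last (Some k) (g k)); rewrite p_last in_cons.
  rewrite (eq_bigr _ (yk_x k kQ)); apply: leq_trans (sum_dom_k_mem_le _ _ Np) _.
    by case/andP: p_uniq.
  by rewrite -subn1 leq_subLR add1n.
- by move=> k kQ j jd; rewrite yk_x // /x_k; case: (j \in _).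
- by move=> j jR; rewrite yr_x // /x_r; case: [exists _ in _, _].
Qed.
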